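(* Suppose $F,\tilde F\in Sh^{s,0}_{\Lambda_L}(X)\cap Mod(X)$ are related by an exact sequence of one of the forms (1) $0\to\tilde F\to F\to\mathcal{L}_X\to0$, or (2) $0\to\mathcal{L}_X\to F\to\tilde F\to0$, with $\mathcal{L}_X\in loc(X)$. Then a local trivialization $f=(f_1,\dots,f_r)$ of $F$ induces a local trivialization $\tilde f=(\tilde f_1,\dots,\tilde f_r)$ of $\tilde F$ (in case (1) by restriction $\tilde f_s=f_s|_{\tilde V}$, in case (2) by passing to the quotient $\tilde V=V/V_0$, where $V_0\subset V$ is the stalk of $\mathcal{L}_X$), and $\epsilon_{(F,f)}=\epsilon_{(\tilde F,\tilde f)}$.
   Context: $X=\mathbb{R}^3$ or $S^3$, $k$ a field, $(L,L')$ an $r$-component framed oriented link, $L=K_1\sqcup\dots\sqcup K_r$; $loc(X)$ denotes locally constant sheaves on $X$. Sheaves in $Sh^{s,0}_{\Lambda_L}(X)\cap Mod(X)$ (sheaves of $k$-vector spaces with micro-support at infinity in the unit conormal of $L$, microlocally simple with Morse cone in degree $0$) are equivalent to data $(V,\rho,W_s,\rho_s,T_s)$: $\rho:\pi_1(X\setminus L)\to GL(V)$ the local system on the complement, $W_s$ the stalk on $K_s$, $T_s:W_s\to V$ the injective restriction map with one-dimensional cokernel, the meridian of $K_s$ acting trivially on its image and the longitude action intertwining with the monodromy of $K_s$; we view $W_s\subset V$. $A_c$ denotes trivialized parallel transport along a path $c$, $M_t=\rho(m_t)$. A local trivialization is an $r$-tuple of surjective linear maps $f_s:V\to k$ with $f_s|_{W_s}=0$.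 $\epsilon_{(F,f)}$ is the augmentation of the framed cord algebra $\mathrm{Cord}(L)$ given on generators by $\epsilon(c_{st})=f_sA_{c_{st}}(\mathrm{id}_V-M_t)f_t^{-1}$ for framed cords $c_{st}$ from the framing curve of $K_s$ to that of $K_t$, $\epsilon(\lambda_s)=f_sA_{\ell_s}f_s^{-1}$ ($\ell_s$ the longitude loop), $\epsilon(\mu_s)=1-f_s(\mathrm{id}_V-M_s)f_s^{-1}$, where $f_s^{-1}$ is any right inverse of $f_s$. *)

From HB Require Import structures.
From mathcomp Require Import all_boot all_order all_algebra.
Set Implicit Arguments. Unset Strict Implicit. Unset Printing Implicit Defensive.
Import GRing.Theory.
Local Open Scope ring_scope.

(* Algebraic model of sheaves on X = R^3 or S^3 with micro-support in the    *)
(* unit conormal of an r-component link L (cf. the equivalence recalled in   *)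
(* the context).  The fundamental group pi_1(X \ L) is modelled by an        *)
(* arbitrary group [G], together with the meridians [mer s] and longitudes   *)
(* [lon s] of the components K_s.  Vector spaces are k^n, viewed as column   *)
(* vectors; linear maps are matrices acting on the left.                     *)
(* A [ldata] is the data (V, rho, W_s, rho_s, T_s) without the conditions:  *)
(*   dV           = dim V (stalk on the complement, with a trivialization)   *)
(*   rho g        = the action of g in pi_1(X\L) on V                        *)
(*   dW s         = dim W_s (stalk on K_s)                                   *)
(*   rhoK s       = monodromy of the stalk local system along K_s            *)
(*   T s          = restriction map W_s -> V                                 *)

Record ldata (k : fieldType) (r : nat) (G : groupType) := LData {
  dV : nat;
  rho : G -> 'M[k]_dV;
  dW : 'I_r -> nat;
  rhoK : forall s : 'I_r, 'M[k]_(dW s);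
  T : forall s : 'I_r, 'M[k]_(dV, dW s)
}.

Definition is_rep (k : fieldType) (r : nat) (G : groupType) (F : ldata k r G) :=
  [/\ forall g, rho F g \in unitmx,
      rho F 1%g = 1%:M,
      forall g h, rho F (g * h)%g = rho F g *m rho F h
    & forall s, rhoK F s \in unitmx].

(* Objects of Sh^{s,0}_{Lambda_L}(X) \cap Mod(X), in terms of the data:
   T_s injective with one-dimensional cokernel, meridian of K_s acting
   trivially on its image, longitude action intertwining with the monodromy. *)
Definition is_Sh_s0 (k : fieldType) (r : nat) (G : groupType)
    (mer lon : 'I_r -> G) (F : ldata k r G) :=
  [/\ is_rep F,
      forall s, \rank (T F s) = dW F s,
      forall s, (dW F s + 1)%N = dV F,
      forall s, rho F (mer s) *m T F s = T F s
    & forall s, rho F (lon s) *m T F s = T F s *m rhoK F s].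

(* The constant local system k^d on X (X is simply connected, so every
   object of loc(X) is of this form): trivial action, stalk k^d everywhere,
   identity restriction maps. *)
Definition const_loc (k : fieldType) (r : nat) (G : groupType) (d : nat)
  : ldata k r G :=
  @LData k r G d (fun _ => 1%:M) (fun _ => d) (fun _ => 1%:M) (fun _ => 1%:M).

(* Morphisms of sheaves F -> F' in terms of the data: a linear map on the
   stalks over the complement and on the stalks over each K_s, compatible
   with all the structure. *)
Definition is_mor (k : fieldType) (r : nat) (G : groupType) (F F' : ldata k r G)
    (phi : 'M[k]_(dV F', dV F)) (psi : forall s, 'M[k]_(dW F' s, dW F s)) :=
  [/\ forall g, phi *m rho F g = rho F' g *m phi,
      forall s, phi *m T F s = T F' s *m psi s
    & forall s, psi s *m rhoK F s = rhoK F' s *m psi s].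

Definition short_exact (k : fieldType) (n m p : nat)
    (a : 'M[k]_(m, n)) (b : 'M[k]_(p, m)) :=
  [/\ \rank a = n, \rank b = p, b *m a = 0 & (n + p)%N = m].

Definition ses (k : fieldType) (r : nat) (G : groupType) (A B C : ldata k r G)
    (a : 'M[k]_(dV B, dV A)) (aK : forall s, 'M[k]_(dW B s, dW A s))
    (b : 'M[k]_(dV C, dV B)) (bK : forall s, 'M[k]_(dW C s, dW B s)) :=
  [/\ is_mor a aK, is_mor b bK, short_exact a b
    & forall s, short_exact (aK s) (bK s)].

(* Local trivialization: f_s : V -> k surjective (i.e. nonzero, as a row
   vector) with f_s|_{W_s} = 0. *)
Definition loc_triv (k : fieldType) (r : nat) (G : groupType) (F : ldata k r G)
    (f : 'I_r -> 'rV[k]_(dV F)) :=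
  forall s, f s != 0 /\ f s *m T F s = 0.

Definition right_inv (k : fieldType) (n r : nat)
    (f : 'I_r -> 'rV[k]_n) (u : 'I_r -> 'cV[k]_n) :=
  forall s, f s *m u s = 1%:M.

(* Generators of the framed cord algebra Cord(L): framed cords c_st (a cord
   from the framing curve of K_s to that of K_t, represented by the element
   of pi_1(X \ L) giving its trivialized parallel transport), lambda_s, mu_s.
   (The inverses lambda_s^-1, mu_s^-1 are determined by these.) *)
Inductive cord_gen (r : nat) (G : Type) :=
| CordC of 'I_r & 'I_r & G
| Lambda of 'I_r
| Mu of 'I_r.

Definition eps (k : fieldType) (r : nat) (G : groupType) (mer lon : 'I_r -> G)
    (F : ldata k r G) (f : 'I_r -> 'rV[k]_(dV F)) (u : 'I_r -> 'cV[k]_(dV F))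
    (x : cord_gen r G) : k :=
  match x with
  | CordC s t c => (f s *m rho F c *m (1%:M - rho F (mer t)) *m u t) ord0 ord0
  | Lambda s => (f s *m rho F (lon s) *m u s) ord0 ord0
  | Mu s => 1 - (f s *m (1%:M - rho F (mer s)) *m u s) ord0 ord0
  end.

(* Two right inverses of f_s differ by an element of ker f_s, which is W_s for
   dimension reasons, and every generator's formula annihilates W_s on the
   right (the meridian fixes W_s, the longitude preserves it); hence
   epsilon_(F,f) does not depend on the right inverse.  A map phi commuting
   with the monodromies transports (f phi, u) to (f, phi u), so epsilon is
   natural.  In case (1) the inclusion of V~ is such a map; f_s does not vanish
   on V~, since V~ <= W_s would, through the stalk sequence on K_s, give
   dim V~ <= dim W~_s = dim V~ - 1.  In case (2) f_s vanishes on
   V_0 = im j <= W_s, hence factors through the projection V -> V/V_0. *)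

From HB Require Import structures.
From mathcomp Require Import all_boot all_order all_algebra.
Import GRing.Theory.
Local Open Scope ring_scope.
Set Implicit Arguments. Unset Strict Implicit.

Section ExactFactor.

Variable k : fieldType.

Lemma exact_row_factor m n p q (B : 'M[k]_(m, n)) (A : 'M[k]_(n, p))
    (w : 'M[k]_(q, n)) :
  B *m A = 0 -> (\rank B + \rank A)%N = n -> w *m A = 0 ->
  w = w *m pinvmx B *m B.
Proof.
move=> BA rk wA.
have sBK : (B <= kermx A)%MS by apply/sub_kermxP.
have sKB : (kermx A <= B)%MS.
  rewrite -(mxrank_leqif_sup sBK) mxrank_ker eq_sym -(eqn_add2r (\rank A)) rk.
  by rewrite subnK ?rank_leq_row.
by rewrite mulmxKpV //; apply: submx_trans sKB; apply/sub_kermxP.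
Qed.

Lemma exact_col_factor m n p q (A : 'M[k]_(m, n)) (B : 'M[k]_(n, p))
    (w : 'M[k]_(n, q)) :
  A *m B = 0 -> (\rank A + \rank B)%N = n -> A *m w = 0 ->
  exists a : 'M[k]_(p, q), w = B *m a.
Proof.
move=> AB rk Aw; exists (w^T *m pinvmx B^T)^T.
apply: trmx_inj; rewrite trmx_mul trmxK; apply: (exact_row_factor (A := A^T)).
- by rewrite -trmx_mul AB trmx0.
- by rewrite !mxrank_tr addnC.
- by rewrite -trmx_mul Aw trmx0.
Qed.

End ExactFactor.

Section Augmentation.

Variables (k : fieldType) (r : nat) (G : groupType) (mer lon : 'I_r -> G).

Lemma ker_loc_triv (F : ldata k r G) (f : 'I_r -> 'rV[k]_(dV F)) s q
    (w : 'M[k]_(dV F, q)) :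
  is_Sh_s0 mer lon F -> loc_triv f -> f s *m w = 0 ->
  exists a : 'M[k]_(dW F s, q), w = T F s *m a.
Proof.
move=> [_ rk_T dim_T _ _] /(_ s) [fs_neq0 fsT] fsw.
by apply: exact_col_factor fsT _ fsw; rewrite rank_rV fs_neq0 rk_T addnC dim_T.
Qed.

Lemma eps_right_inv_indep (F : ldata k r G) (f : 'I_r -> 'rV[k]_(dV F))
    (u u' : 'I_r -> 'cV[k]_(dV F)) :
  is_Sh_s0 mer lon F -> loc_triv f -> right_inv f u -> right_inv f u' ->
  forall x, eps mer lon f u x = eps mer lon f u' x.
Proof.
move=> ShF ltf fu fu' x.
have move_u t (a : 'rV[k]_(dV F)) : a *m T F t = 0 -> a *m u t = a *m u' t.
  move=> aT; apply/eqP; rewrite -subr_eq0 -mulmxBr.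
  have [|b ->] := ker_loc_triv ShF ltf (s := t) (w := u t - u' t).
    by rewrite mulmxBr fu fu' subrr.
  by rewrite mulmxA aT mul0mx.
have [_ _ _ mer_T lon_T] := ShF.
have mer_killT t : (1%:M - rho F (mer t)) *m T F t = 0.
  by rewrite mulmxBl mul1mx mer_T subrr.
case: x => [s t c|s|s] /=; rewrite move_u //.
- by rewrite -mulmxA mer_killT mulmx0.
- by rewrite -mulmxA lon_T mulmxA (proj2 (ltf s)) mul0mx.
- by rewrite -mulmxA mer_killT mulmx0.
Qed.

Lemma eps_transport (F F' : ldata k r G) (phi : 'M[k]_(dV F, dV F'))
    (f : 'I_r -> 'rV[k]_(dV F)) (f' : 'I_r -> 'rV[k]_(dV F'))
    (u' : 'I_r -> 'cV[k]_(dV F')) :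
  (forall g, phi *m rho F' g = rho F g *m phi) ->
  (forall s, f' s = f s *m phi) ->
  forall x, eps mer lon f' u' x = eps mer lon f (fun s => phi *m u' s) x.
Proof.
move=> phi_rho f'E x.
have phi_rhoA g (w : 'cV[k]_(dV F')) :
    phi *m (rho F' g *m w) = rho F g *m (phi *m w).
  by rewrite !mulmxA phi_rho.
have phi_1BA g (w : 'cV[k]_(dV F')) :
    phi *m ((1%:M - rho F' g) *m w) = (1%:M - rho F g) *m (phi *m w).
  by rewrite !mulmxBl !mul1mx mulmxBr phi_rhoA.
by case: x => [s t c|s|s] /=; rewrite f'E -!mulmxA ?phi_rhoA ?phi_1BA.
Qed.

Lemma ses_sub_not_in_stalk (F Ft : ldata k r G) d
    (i : 'M[k]_(dV F, dV Ft)) (iK : forall s, 'M[k]_(dW F s, dW Ft s))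
    (q : 'M[k]_(dV (const_loc k r G d), dV F))
    (qK : forall s, 'M[k]_(dW (const_loc k r G d) s, dW F s))
    s (a : 'M[k]_(dW F s, dV Ft)) :
  is_Sh_s0 mer lon Ft -> ses i iK q qK -> i <> T F s *m a.
Proof.
move=> [_ _ dim_Ft _ _] [_ [_ q_T _] [rk_i _ qi _] exK] iE.
have [rk_iK rk_qK qKiK dimK] := exK s.
have qKa : qK s *m a = 0.
  by have := q_T s; rewrite /= mul1mx => <-; rewrite -mulmxA -iE qi.
have [|b aE] := exact_col_factor qKiK _ qKa; first by rewrite rk_qK rk_iK addnC.
have : (\rank i <= \rank (iK s))%N.
  by rewrite iE aE; apply: leq_trans (mxrankM_maxr _ _) (mxrankM_maxl _ _).
by rewrite rk_i rk_iK -(dim_Ft s) addn1 ltnn.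
Qed.

Lemma loc_triv_restrict (F Ft : ldata k r G) d
    (i : 'M[k]_(dV F, dV Ft)) (iK : forall s, 'M[k]_(dW F s, dW Ft s))
    (q : 'M[k]_(dV (const_loc k r G d), dV F))
    (qK : forall s, 'M[k]_(dW (const_loc k r G d) s, dW F s))
    (f : 'I_r -> 'rV[k]_(dV F)) :
  is_Sh_s0 mer lon F -> is_Sh_s0 mer lon Ft -> ses i iK q qK -> loc_triv f ->
  loc_triv (fun s => f s *m i).
Proof.
move=> ShF ShFt ses_iq ltf s; have [[_ i_T _] _ _ _] := ses_iq; split.
- apply/eqP => /(ker_loc_triv ShF ltf) [a iE].
  exact: ses_sub_not_in_stalk ShFt ses_iq iE.
- by rewrite -mulmxA i_T mulmxA (proj2 (ltf s)) mul0mx.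
Qed.

Lemma loc_triv_factor_quot (F Ft : ldata k r G) d
    (j : 'M[k]_(dV F, dV (const_loc k r G d)))
    (jK : forall s, 'M[k]_(dW F s, dW (const_loc k r G d) s))
    (p : 'M[k]_(dV Ft, dV F)) (pK : forall s, 'M[k]_(dW Ft s, dW F s))
    (f : 'I_r -> 'rV[k]_(dV F)) s :
  ses j jK p pK -> loc_triv f -> f s *m pinvmx p *m p = f s.
Proof.
move=> [[_ j_T _] _ [rk_j rk_p pj dimF] _] ltf.
have fj0 : f s *m j = 0.
  have := j_T s; rewrite /= mulmx1 => ->.
  by rewrite mulmxA (proj2 (ltf s)) mul0mx.
by rewrite -(exact_row_factor pj _ fj0) // rk_p rk_j addnC dimF.
Qed.

Lemma loc_triv_quot (F Ft : ldata k r G) (p : 'M[k]_(dV Ft, dV F))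
    (pK : forall s, 'M[k]_(dW Ft s, dW F s))
    (f : 'I_r -> 'rV[k]_(dV F)) (ft : 'I_r -> 'rV[k]_(dV Ft)) :
  is_mor p pK -> (forall s, \rank (pK s) = dW Ft s) ->
  (forall s, ft s *m p = f s) -> loc_triv f -> loc_triv ft.
Proof.
move=> [_ p_T _] rk_pK ftp ltf s; split.
  by apply: contraNneq (proj1 (ltf s)) => ft0; rewrite -ftp ft0 mul0mx.
have /row_freeP [Y pKY] : row_free (pK s) by rewrite /row_free rk_pK.
by rewrite -[LHS]mulmx1 -pKY mulmxA -(mulmxA _ (T Ft s)) -p_T mulmxA ftp
  (proj2 (ltf s)) mul0mx.
Qed.

End Augmentation.

Unset Implicit Arguments. Set Strict Implicit.

Theorem proposition4p7 (k : fieldType) (r : nat) (G : groupType)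
    (mer lon : 'I_r -> G) (F Ft : ldata k r G) (d : nat) :
  is_Sh_s0 mer lon F -> is_Sh_s0 mer lon Ft ->
  (* case (1): 0 -> Ft -> F -> L_X -> 0, induced f~_s = f_s restricted *)
  (forall (i : 'M[k]_(dV F, dV Ft)) (iK : forall s, 'M[k]_(dW F s, dW Ft s))
          (q : 'M[k]_(dV (const_loc k r G d), dV F))
          (qK : forall s, 'M[k]_(dW (const_loc k r G d) s, dW F s))
          (f : 'I_r -> 'rV[k]_(dV F)),
      ses i iK q qK -> loc_triv f ->
      let ft := fun s => f s *m i in
      loc_triv ft /\
      forall u ut, right_inv f u -> right_inv ft ut ->
        forall x, eps mer lon f u x = eps mer lon ft ut x) /\
  (* case (2): 0 -> L_X -> F -> Ft -> 0, induced f~ on the quotient V/V_0 *)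
  (forall (j : 'M[k]_(dV F, dV (const_loc k r G d)))
          (jK : forall s, 'M[k]_(dW F s, dW (const_loc k r G d) s))
          (p : 'M[k]_(dV Ft, dV F)) (pK : forall s, 'M[k]_(dW Ft s, dW F s))
          (f : 'I_r -> 'rV[k]_(dV F)),
      ses j jK p pK -> loc_triv f ->
      exists ft : 'I_r -> 'rV[k]_(dV Ft),
        (forall s, ft s *m p = f s) /\
        loc_triv ft /\
        forall u ut, right_inv f u -> right_inv ft ut ->
          forall x, eps mer lon f u x = eps mer lon ft ut x).
Proof.
move=> ShF ShFt; split.
- move=> i iK q qK f ses_iq ltf ft.
  have [[i_rho _ _] _ _ _] := ses_iq.
  have ltft : loc_triv ft by apply: loc_triv_restrict ShF ShFt ses_iq ltf.
  split=> // u ut fu ftut x.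
  have f_iut : right_inv f (fun s => i *m ut s) by move=> s; rewrite mulmxA ftut.
  rewrite (eps_right_inv_indep ShF ltf fu f_iut).
  by rewrite (eps_transport mer lon ut i_rho
    (fun s => erefl : ft s = f s *m i)).
- move=> j jK p pK f ses_jp ltf.
  have [_ p_mor _ exK] := ses_jp; have [p_rho _ _] := p_mor.
  pose ft s := f s *m pinvmx p.
  have ftp s : ft s *m p = f s by apply: loc_triv_factor_quot ses_jp ltf.
  have ltft : loc_triv ft.
    by apply: loc_triv_quot p_mor _ ftp ltf => s; have [] := exK s.
  exists ft; split=> //; split=> // u ut fu ftut x.
  have ft_pu : right_inv ft (fun s => p *m u s) by move=> s; rewrite mulmxA ftp fu.
  rewrite (eps_right_inv_indep ShFt ltft ftut ft_pu).
  by rewrite (eps_transport mer lon u p_rho (fun s => esym (ftp s))).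
Qed.
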